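(* Let $V$ be a finite set, $h:2^V\to\mathbb{R}_{\ge0}$ a non-negative submodular function, $a\in\mathbb{R}^V$ with $\max_ia_i>0$, $f(\delta):=\min_{S\subseteq V}h_\delta(S)$ with $h_\delta(S):=h(S)-\delta a(S)$, and $\delta^*$ the largest root of $f$. Let $\delta^{(1)}>\dots>\delta^{(\ell)}=\delta^*$ be the iterates of the look-ahead Newton–Dinkelbach method on $f$ (with the initialization in the context), and for $i\in[\ell]$ let $S^{(i)}\in\operatorname{argmax}\{a(S): S\in\operatorname{argmin}_{T\subseteq V}h_{\delta^{(i)}}(T)\}$. Let $q:=\lfloor(\ell+3)/4\rfloor$ and $T_i:=S^{(\ell-4(i-1))}$ for $i\in[q]$. Then $h_{\delta^*}$ is a non-negative submodular function, the sets $T_1,\dots,T_q$ are distinct, and $h_{\delta^*}(T_{i+1})>4h_{\delta^*}(T_i)$ for all $i\in[q-1]$.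
   Context: $a(S):=\sum_{i\in S}a_i$. Supergradients of $f$ at $\delta$ are obtained as $-a(S)$ for minimizers $S$ of $h_\delta$. Initialization: $\delta^{(1)}:=\min\{h(\{i\})/a_i: a_i>0\}$; if $f(\delta^{(1)})=0$ stop; otherwise $g^{(1)}:=-a(S)$ for a minimizer $S$ of $h_{\delta^{(1)}}$ (then $g^{(1)}<0$). Look-ahead Newton–Dinkelbach method: for $i=1,2,\dots$: if $f(\delta^{(i)})=0$ return $\delta^{(i)}$; else $\delta:=\delta^{(i)}-f(\delta^{(i)})/g^{(i)}$ with a supergradient $g$ at $\delta$; return NO ROOT if $f(\delta)<0$ and $g\ge0$; let $\delta':=2\delta-\delta^{(i)}$ with supergradient $g'$; if $f(\delta')<0$ and $g'<0$ replace $(\delta,g)$ by $(\delta',g')$; set $\delta^{(i+1)}:=\delta$, $g^{(i+1)}:=g$. *)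

From HB Require Import structures.
From mathcomp Require Import all_boot all_order all_algebra.
Set Implicit Arguments. Unset Strict Implicit. Unset Printing Implicit Defensive.
Import Order.TTheory GRing.Theory Num.Theory.
Local Open Scope ring_scope.

Section Defs.
Variables (R : realFieldType) (V : finType).

Definition aset (a : V -> R) (S : {set V}) : R := \sum_(i in S) a i.

Definition hdelta (h : {set V} -> R) (a : V -> R) (d : R) (S : {set V}) : R :=
  h S - d * aset a S.

Definition submodular (h : {set V} -> R) : Prop :=
  forall A B : {set V}, h (A :|: B) + h (A :&: B) <= h A + h B.

Definition nonneg_setfun (h : {set V} -> R) : Prop := forall S, 0 <= h S.

Definition fmin (h : {set V} -> R) (a : V -> R) (d : R) : R :=
  \big[Order.min/hdelta h a d set0]_(S : {set V}) hdelta h a d S.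

Definition is_minimizer (h : {set V} -> R) (a : V -> R) (d : R) (S : {set V}) : Prop :=
  forall T, hdelta h a d S <= hdelta h a d T.

Definition is_supergrad (h : {set V} -> R) (a : V -> R) (d g : R) : Prop :=
  exists S, is_minimizer h a d S /\ g = - aset a S.

Definition is_largest_root (h : {set V} -> R) (a : V -> R) (d : R) : Prop :=
  fmin h a d = 0 /\ forall x, fmin h a x = 0 -> x <= d.

(* A terminating run of the look-ahead Newton-Dinkelbach method returning
   delta ell, with iterates delta 1, ..., delta ell and supergradients g i
   (indices 1-based). *)
Definition lookahead_ND_run (h : {set V} -> R) (a : V -> R) (ell : nat)
    (delta g : nat -> R) : Prop :=
  let f := fmin h a in
  [/\ ((1 <= ell)%N /\
      (exists i, 0 < a i /\ delta 1%N = h [set i] / a i) /\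
      (forall i, 0 < a i -> delta 1%N <= h [set i] / a i)),
      ((1 < ell)%N -> is_supergrad h a (delta 1%N) (g 1%N)),
      (forall i, (1 <= i < ell)%N -> f (delta i) != 0),
      (forall i, (1 <= i < ell)%N ->
        exists d gd d' gd',
          [/\ d = delta i - f (delta i) / g i,
              is_supergrad h a d gd /\ ~ (f d < 0 /\ 0 <= gd),
              d' = 2 * d - delta i,
              is_supergrad h a d' gd' &
              (if (f d' < 0) && (gd' < 0)
               then delta i.+1 = d' /\ g i.+1 = gd'
               else delta i.+1 = d /\ g i.+1 = gd)]) &
      f (delta ell) = 0].

End Defs.

(* Write phi := h_{dstar} and tau_i := delta_i - dstar, so that
   h_{delta_i}(S) = phi(S) - tau_i a(S).  Since f < 0 to the right of dstar,
   the potential P_i := tau_i a(S_i) dominates phi(S_i), strictly for i < ell.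
   If U minimizes h_{delta_i}, the Newton point d satisfies
   phi(U) = (d - dstar) a(U), whence P_{i+1} <= phi(U) <= phi(S_i).  Moreover
   2 P_{i+1} <= P_i: if the look-ahead point 2d - delta_i is accepted, then
   f(2d - delta_i) < 0 forces a(U) > 2 a(S_{i+1}); if it is rejected, it lies
   left of dstar, so d is at most halfway from dstar to delta_i.  Four steps
   give 4 phi(S_{k+4}) <= P_{k+1} / 2 < phi(S_k), and phi(S_k) is
   nonincreasing in k, which yields both the growth and the distinctness of
   the T_i. *)

From HB Require Import structures.
From mathcomp Require Import all_boot all_order all_algebra.
From mathcomp Require Import ring lra zify.
Import Order.TTheory GRing.Theory Num.Theory.
Local Open Scope ring_scope.
Set Implicit Arguments. Unset Strict Implicit.

Section SetFunctions.
Variables (R : realFieldType) (V : finType) (h : {set V} -> R) (a : V -> R).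

Lemma fmin_le d S : fmin h a d <= hdelta h a d S.
Proof. exact: bigmin_le. Qed.

Lemma minimizer_hdelta d S : is_minimizer h a d S -> hdelta h a d S = fmin h a d.
Proof.
move=> minS; apply/le_anti; rewrite fmin_le andbT.
by apply/bigmin_geP; split=> [|T _]; apply: minS.
Qed.

Lemma hdelta_shift x d S : hdelta h a x S = hdelta h a d S - (x - d) * aset a S.
Proof. rewrite /hdelta; ring. Qed.

Lemma aset1 i : aset a [set i] = a i.
Proof. by rewrite /aset big_set1. Qed.

Lemma asetUI A B : aset a (A :|: B) + aset a (A :&: B) = aset a A + aset a B.
Proof.
rewrite /aset !(big_mkcond (fun i => i \in _)) -!big_split /=.
apply: eq_bigr => i _; rewrite in_setU in_setI.
by case: (i \in A); case: (i \in B); rewrite /= ?addr0 ?add0r.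
Qed.

Lemma submodular_hdelta d : submodular h -> submodular (hdelta h a d).
Proof.
move=> subh A B; have := subh A B; have := asetUI A B; rewrite /hdelta => UI.
have -> : h (A :|: B) - d * aset a (A :|: B) + (h (A :&: B) - d * aset a (A :&: B))
  = h (A :|: B) + h (A :&: B) - d * (aset a (A :|: B) + aset a (A :&: B)) by ring.
rewrite UI; lra.
Qed.

Lemma hdelta_ge0_at_root d : fmin h a d = 0 -> nonneg_setfun (hdelta h a d).
Proof. by move=> f0 S; rewrite -f0 fmin_le. Qed.

Lemma minimizer_aset_le x y S S' :
  x < y -> is_minimizer h a x S -> is_minimizer h a y S' -> aset a S <= aset a S'.
Proof.
move=> xy minS minS'; have := minS S'; have := minS' S; rewrite /hdelta => h1 h2.
have : (y - x) * (aset a S - aset a S') <= 0 by lra.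
by rewrite pmulr_rle0 ?subr_gt0 // subr_le0.
Qed.

Lemma hdelta_le_of_aset_le d x S S' : d <= x -> is_minimizer h a x S ->
  aset a S <= aset a S' -> hdelta h a d S <= hdelta h a d S'.
Proof.
move=> dx minS aSS'; have := minS S'; rewrite !(hdelta_shift x d).
have : (x - d) * aset a S <= (x - d) * aset a S' by rewrite ler_wpM2l ?subr_ge0.
lra.
Qed.

Lemma fmin_ratio_root : nonneg_setfun h -> (exists i, 0 < a i) ->
  exists2 S, 0 < aset a S & fmin h a (h S / aset a S) = 0.
Proof.
move=> h_ge0 [i ai_gt0].
have ai_ratio : 0 < aset a [set i] by rewrite aset1.
have [S /= aS_gt0 ratio_min] :=
  @arg_minP _ _ _ [set i] (fun S : {set V} => 0 < aset a S) (fun S => h S / aset a S) ai_ratio.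
exists S => //; set r := h S / aset a S.
have hS0 : hdelta h a r S = 0 by rewrite /hdelta /r mulrVK ?subrr // unitfE gt_eqF.
have hr_ge0 T : 0 <= hdelta h a r T.
  rewrite /hdelta subr_ge0; case: (ltP 0 (aset a T)) => [aT_gt0|aT_le0].
    by rewrite -ler_pdivlMr //; apply: ratio_min.
  by apply: le_trans (h_ge0 T); rewrite mulr_ge0_le0 // divr_ge0 // ltW.
apply/le_anti; rewrite -{1}hS0 fmin_le /=.
by apply/bigmin_geP; split=> [|T _]; apply: hr_ge0.
Qed.

Section LargestRoot.
Variable dstar : R.
Hypotheses (h_ge0 : nonneg_setfun h) (a_pos : exists i, 0 < a i)
  (dstar_root : is_largest_root h a dstar).

Local Notation phi := (hdelta h a dstar).

Lemma phi_ge0 : nonneg_setfun phi.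
Proof. exact: hdelta_ge0_at_root dstar_root.1. Qed.

Lemma fmin_lt0 x : dstar < x -> fmin h a x < 0.
Proof.
move=> dstar_x; have [S aS_gt0 /dstar_root.2 r_le] := fmin_ratio_root h_ge0 a_pos.
apply: le_lt_trans (fmin_le x S) _.
rewrite /hdelta subr_lt0 -ltr_pdivrMr //.
by apply: le_lt_trans r_le dstar_x.
Qed.

Lemma fmin_le0 x : dstar <= x -> fmin h a x <= 0.
Proof.
rewrite le_eqVlt => /orP[/eqP<-|/fmin_lt0/ltW //].
by rewrite dstar_root.1.
Qed.

Lemma minimizer_aset_gt0 x U : dstar < x -> is_minimizer h a x U -> 0 < aset a U.
Proof.
move=> dstar_x minU; have := fmin_lt0 dstar_x.
rewrite -(minimizer_hdelta minU) (hdelta_shift x dstar) => fU_lt0.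
have : 0 < (x - dstar) * aset a U by have := phi_ge0 U; lra.
by rewrite pmulr_rgt0 // subr_gt0.
Qed.

Section LookaheadRun.
Variables (ell : nat) (delta g : nat -> R) (Sit : nat -> {set V}).
Hypotheses (run : lookahead_ND_run h a ell delta g)
  (delta_decr : forall i, (1 <= i < ell)%N -> delta i.+1 < delta i)
  (delta_ell : delta ell = dstar)
  (Sit_argmax : forall i, (1 <= i <= ell)%N ->
     is_minimizer h a (delta i) (Sit i) /\
     forall T, is_minimizer h a (delta i) T -> aset a T <= aset a (Sit i)).

Lemma delta_ltn i j : (1 <= i)%N -> (i < j <= ell)%N -> delta j < delta i.
Proof.
move=> i_ge1; elim: j => // j IH /andP[]; rewrite ltnS leq_eqVlt => /orP[/eqP<-|ij] jl.
  by apply: delta_decr; lia.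
by apply: lt_trans (IH _); [apply: delta_decr | apply/andP]; lia.
Qed.

Lemma delta_gt_dstar i : (1 <= i < ell)%N -> dstar < delta i.
Proof. by move=> /andP[i_ge1 i_lt]; rewrite -delta_ell delta_ltn // i_lt /=. Qed.

Lemma delta_ge_dstar i : (1 <= i <= ell)%N -> dstar <= delta i.
Proof.
case/andP=> i_ge1; rewrite leq_eqVlt => /orP[/eqP->|i_lt].
  by rewrite delta_ell.
by rewrite ltW // delta_gt_dstar // i_ge1.
Qed.

Lemma supergrad_iter i : (1 <= i < ell)%N -> is_supergrad h a (delta i) (g i).
Proof.
case: run => [_ g1 _ iter _]; case: i => [//|[|i] i_lt]; first exact: g1 i_lt.
have [d [gd [d' [gd' [_ [sg_d _] _ sg_d' next]]]]] := iter i.+1 (ltnW i_lt).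
by case: ifP next => _ [-> ->].
Qed.

Definition newton_point i := delta i - fmin h a (delta i) / g i.

Lemma newton_minimizer i : (1 <= i < ell)%N -> exists U,
  [/\ is_minimizer h a (delta i) U, 0 < aset a U &
      phi U = (newton_point i - dstar) * aset a U].
Proof.
move=> i_run; have [U [minU gU]] := supergrad_iter i_run; exists U.
have aU_gt0 := minimizer_aset_gt0 (delta_gt_dstar i_run) minU.
split=> //; rewrite /newton_point gU -(minimizer_hdelta minU) /hdelta.
by field; rewrite gt_eqF.
Qed.

Lemma newton_point_lt i : (1 <= i < ell)%N -> newton_point i < delta i.
Proof.
move=> i_run; have [U [minU gU]] := supergrad_iter i_run.
have aU_gt0 := minimizer_aset_gt0 (delta_gt_dstar i_run) minU.
rewrite /newton_point gtrBl gU invrN mulrN -mulNr divr_gt0 // oppr_gt0.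
exact: fmin_lt0 (delta_gt_dstar i_run).
Qed.

Lemma next_iterate i : (1 <= i < ell)%N ->
  (delta i.+1 = 2 * newton_point i - delta i /\ fmin h a (delta i.+1) < 0) \/
  (delta i.+1 = newton_point i /\ 2 * newton_point i - delta i <= dstar).
Proof.
case: run => [_ _ _ iter _] /iter [d [gd [d' [gd' [-> _ -> [U' [minU' ->]] next]]]]].
case: ifP next => [/andP[fd'_lt0 _] [-> _]|rejected [-> _]]; [by left | right].
split=> //; rewrite leNgt; apply/negP => lookahead_gt.
move/negbT: rejected; rewrite fmin_lt0 //= oppr_lt0.
by rewrite (minimizer_aset_gt0 lookahead_gt minU').
Qed.

Lemma delta_succ_le_newton i : (1 <= i < ell)%N -> delta i.+1 <= newton_point i.
Proof.
move=> i_run; have := newton_point_lt i_run.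
by case: (next_iterate i_run) => [[-> _]|[-> _]]; lra.
Qed.

Lemma Sit_minimizer i : (1 <= i <= ell)%N -> is_minimizer h a (delta i) (Sit i).
Proof. by move/Sit_argmax=> []. Qed.

Definition potential k := (delta k - dstar) * aset a (Sit k).

Lemma phi_Sit_le_potential k : (1 <= k <= ell)%N -> phi (Sit k) <= potential k.
Proof.
move=> k_run; have := fmin_le0 (delta_ge_dstar k_run).
by rewrite -(minimizer_hdelta (Sit_minimizer k_run)) (hdelta_shift _ dstar) subr_le0.
Qed.

Lemma potential_gt0 k : (1 <= k < ell)%N -> 0 < potential k.
Proof.
move=> k_run; have k_run' : (1 <= k <= ell)%N by lia.
have := fmin_lt0 (delta_gt_dstar k_run).
rewrite -(minimizer_hdelta (Sit_minimizer k_run')) (hdelta_shift _ dstar) subr_lt0.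
exact: le_lt_trans (phi_ge0 _).
Qed.

Lemma potential_succ_le_phi i : (1 <= i < ell)%N -> potential i.+1 <= phi (Sit i).
Proof.
move=> i_run; have [U [minU aU_gt0 phiU]] := newton_minimizer i_run.
have i_run' : (1 <= i <= ell)%N by lia.
have i1_run : (1 <= i.+1 <= ell)%N by lia.
have aS1_le : aset a (Sit i.+1) <= aset a U.
  exact: minimizer_aset_le (delta_decr i_run) (Sit_minimizer i1_run) minU.
have phiU_le : phi U <= phi (Sit i).
  exact: hdelta_le_of_aset_le (delta_ge_dstar i_run') minU ((Sit_argmax i_run').2 U minU).
have tau1_ge0 : 0 <= delta i.+1 - dstar by rewrite subr_ge0 delta_ge_dstar.
have tau1_le : delta i.+1 - dstar <= newton_point i - dstar.
  by rewrite lerD2r delta_succ_le_newton.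
apply: le_trans phiU_le; rewrite phiU /potential.
apply: le_trans (ler_wpM2l tau1_ge0 aS1_le) _.
by rewrite ler_pM2r.
Qed.

Lemma potential_succ_halves i : (1 <= i < ell)%N -> 2 * potential i.+1 <= potential i.
Proof.
move=> i_run; have [U [minU aU_gt0 phiU]] := newton_minimizer i_run.
have i_run' : (1 <= i <= ell)%N by lia.
have i1_run : (1 <= i.+1 <= ell)%N by lia.
have aS1_le : aset a (Sit i.+1) <= aset a U.
  exact: minimizer_aset_le (delta_decr i_run) (Sit_minimizer i1_run) minU.
have aU_le : aset a U <= aset a (Sit i) := (Sit_argmax i_run').2 U minU.
have tau_gt0 : 0 < delta i - dstar by rewrite subr_gt0 delta_gt_dstar.
have tau1_ge0 : 0 <= delta i.+1 - dstar by rewrite subr_ge0 delta_ge_dstar.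
have newton_lt := newton_point_lt i_run.
rewrite /potential; case: (next_iterate i_run) => [[accepted f1_lt0]|[rejected lookahead_le]].
- have aU_gt : 2 * aset a (Sit i.+1) < aset a U.
    have := minU (Sit i.+1); rewrite !(hdelta_shift (delta i) dstar) phiU.
    move: f1_lt0; rewrite -(minimizer_hdelta (Sit_minimizer i1_run)) (hdelta_shift _ dstar).
    rewrite accepted => f1_lt0 minU_S1.
    have : 0 < (delta i - newton_point i) * (aset a U - 2 * aset a (Sit i.+1)).
      by have := phi_ge0 (Sit i.+1); lra.
    by rewrite pmulr_rgt0 ?subr_gt0.
  rewrite mulrCA; apply: le_trans (_ : _ <= (delta i.+1 - dstar) * aset a U) _.
    by rewrite ler_wpM2l // ltW.
  apply: le_trans (_ : _ <= (delta i - dstar) * aset a U) _.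
    by rewrite ler_pM2r // lerD2r ltW // delta_decr.
  by rewrite ler_pM2l.
- have tau1_le : 2 * (delta i.+1 - dstar) <= delta i - dstar by rewrite rejected; lra.
  rewrite mulrA; apply: le_trans (_ : _ <= 2 * (delta i.+1 - dstar) * aset a (Sit i)) _.
    by rewrite ler_wpM2l ?mulr_ge0 //; apply: le_trans aU_le.
  by rewrite ler_wpM2r //; apply: le_trans aU_le; apply: ltW.
Qed.

Lemma phi_Sit_drop4 k : (1 <= k)%N -> (k.+4 <= ell)%N -> 4 * phi (Sit k.+4) < phi (Sit k).
Proof.
move=> k_ge1 k_le.
have := phi_Sit_le_potential (k := k.+4) ltac:(lia).
have := potential_succ_halves (i := k.+3) ltac:(lia).
have := potential_succ_halves (i := k.+2) ltac:(lia).
have := potential_succ_halves (i := k.+1) ltac:(lia).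
have := potential_succ_le_phi (i := k) ltac:(lia).
have := potential_gt0 (k := k.+1) ltac:(lia).
lra.
Qed.

Lemma phi_Sit_antitone m k : (1 <= m <= k)%N -> (k <= ell)%N -> phi (Sit k) <= phi (Sit m).
Proof.
case/andP=> m_ge1; rewrite leq_eqVlt => /orP[/eqP-> //|m_lt k_le].
apply: hdelta_le_of_aset_le (delta_ge_dstar _) (Sit_minimizer _) _; try lia.
apply: minimizer_aset_le (delta_ltn m_ge1 _) (Sit_minimizer _) (Sit_minimizer _); lia.
Qed.

Definition Tseq i := Sit (ell - 4 * (i - 1)).

Lemma phi_Tseq_growth i : (1 <= i < (ell + 3) %/ 4)%N -> 4 * phi (Tseq i) < phi (Tseq i.+1).
Proof.
move=> i_q; rewrite /Tseq.
have -> : (ell - 4 * (i.+1 - 1) = ell - 4 * i)%N by lia.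
have -> : (ell - 4 * (i - 1) = (ell - 4 * i).+4)%N by lia.
apply: phi_Sit_drop4; lia.
Qed.

Lemma Tseq_injective i j : (1 <= i <= (ell + 3) %/ 4)%N -> (1 <= j <= (ell + 3) %/ 4)%N ->
  i != j -> Tseq i != Tseq j.
Proof.
wlog i_lt : i j / (i < j)%N.
  move=> lt_case i_q j_q ij; case: (ltngtP i j) ij => [i_lt _|j_lt _|->]; last by rewrite eqxx.
    by apply: lt_case => //; lia.
  by rewrite eq_sym; apply: lt_case => //; lia.
move=> i_q j_q _; apply/eqP => Tij.
have growth := phi_Tseq_growth (i := i) ltac:(lia).
have antitone : phi (Tseq i.+1) <= phi (Tseq j).
  by rewrite /Tseq subSS subn0; apply: phi_Sit_antitone; lia.
have := phi_ge0 (Tseq i); rewrite -Tij in antitone; lra.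
Qed.

End LookaheadRun.
End LargestRoot.
End SetFunctions.

Theorem lemma5p4 (R : realFieldType) (V : finType)
    (h : {set V} -> R) (a : V -> R) (dstar : R)
    (ell : nat) (delta g : nat -> R) (Sit : nat -> {set V}) :
  nonneg_setfun h ->
  submodular h ->
  (exists i, 0 < a i) ->
  is_largest_root h a dstar ->
  lookahead_ND_run h a ell delta g ->
  (* delta 1 > ... > delta ell = dstar *)
  (forall i, (1 <= i < ell)%N -> delta i.+1 < delta i) ->
  delta ell = dstar ->
  (* S i in argmax { a(S) : S in argmin h_{delta i} } *)
  (forall i, (1 <= i <= ell)%N ->
     is_minimizer h a (delta i) (Sit i) /\
     forall T, is_minimizer h a (delta i) T -> aset a T <= aset a (Sit i)) ->
  let q := ((ell + 3) %/ 4)%N in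
  let T := fun i : nat => Sit (ell - 4 * (i - 1))%N in
  [/\ nonneg_setfun (hdelta h a dstar),
      submodular (hdelta h a dstar),
      (forall i j, (1 <= i <= q)%N -> (1 <= j <= q)%N -> i != j -> T i != T j) &
      (forall i, (1 <= i < q)%N ->
         hdelta h a dstar (T i.+1) > 4 * hdelta h a dstar (T i))].
Proof.
move=> h_ge0 h_sub a_pos dstar_root run delta_decr delta_ell Sit_argmax q T.
split.
- exact: phi_ge0 dstar_root.
- exact: submodular_hdelta.
- exact: (Tseq_injective h_ge0 a_pos dstar_root run delta_decr delta_ell Sit_argmax).
- exact: (phi_Tseq_growth h_ge0 a_pos dstar_root run delta_decr delta_ell Sit_argmax).
Qed.
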